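(* Let $X$ be an $L$-space with a convexifying operator $P$, $(T,r)$ a metric compact, $\mu$ a Borel measure on $T$, $\omega$ a modulus of continuity, and $Q\subset T$ a compact set with $\mu(Q)>0$. Then for all $t\in T$ and $f\in H^\omega(T,X)$, $$h_X\Big(P(f(t)),\tfrac{1}{\mu(Q)}\int_Q f(s)\,d\mu(s)\Big)\le\tfrac{1}{\mu(Q)}\int_Q\omega(r(t,s))\,d\mu(s).$$ If $X$ is isotropic and $X^{\rm c}\ne\{\theta\}$, then the inequality is sharp, i.e. for every $t\in T$ the supremum of the left-hand side over $f\in H^\omega(T,X)$ equals the right-hand side.
   Context: Semilinear space: a set $X$ with addition and multiplication by reals such that for all $x,y,z\in X$, $\alpha,\beta\in\mathbb R$: $x+y=y+x$; $x+(y+z)=(x+y)+z$; there is $\theta$ with $x+\theta=x$; $\alpha(x+y)=\alpha x+\alpha y$; $\alpha(\beta x)=(\alpha\beta)x$; $1\cdot x=x$, $0\cdot x=\theta$. $x$ is convex if $(\alpha+\beta)x=\alpha x+\beta x$ for all $\alpha,\beta\ge0$; $X^{\rm c}$ is the set of convex elements. An $L$-space is a semilinear space with a complete separable metric $h_X$ satisfying $h_X(\alpha x,\alpha y)=|\alpha|h_X(x,y)$ and $h_X(x+z,y+z)\le h_X(x,y)$; isotropic if the latter is always an equality. A convexifying operator is a surjective map $P\colon X\to X^{\rm c}$ with $h_X(P(x),P(y))\le h_X(x,y)$, $P\circ P=P$, $P(\alpha x+\beta y)=\alpha P(x)+\beta P(y)$ for all $x,y$, $\alpha,\beta\in\mathbb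 R$. Integral: $f\colon T\to X$ is measurable if $h_X(f(\cdot),x)$ is Borel measurable for each $x$; for a simple bounded $f$ taking the value $f_i$ on pairwise disjoint Borel sets $T_i$ covering $T$, $\int_T f\,d\mu=\sum_i P(f_i)\mu(T_i)$; for a bounded measurable $f$, $\int_Tf\,d\mu$ is the limit of the integrals of any uniformly bounded sequence of simple functions converging to $f$ $\mu$-a.e. (the limit exists and does not depend on the sequence); $\int_Q f\,d\mu=\int_T\chi_Qf\,d\mu$ with $\chi_Q$ the indicator of $Q$. A modulus of continuity is a non-decreasing continuous $\omega\colon[0,\infty)\to[0,\infty)$ with $\omega(0)=0$ and $\omega(a+b)\le\omega(a)+\omega(b)$; $H^\omega(T,X)=\{f\colon T\to X:\ h_X(f(s),f(t))\le\omega(r(s,t))\ \forall s,t\}$. *)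

From Stdlib Require List.
From HB Require Import structures.
From mathcomp Require Import all_boot all_order all_algebra.
From mathcomp Require Import all_classical all_reals all_analysis.
Set Implicit Arguments. Unset Strict Implicit. Unset Printing Implicit Defensive.
Import Order.TTheory GRing.Theory Num.Theory.
Import numFieldNormedType.Exports.
Local Open Scope classical_set_scope.
Local Open Scope ring_scope.

Section Defs.
Variable R : realType.

Section Semilinear.
Variables (X : Type) (add : X -> X -> X) (smul : R -> X -> X) (theta : X).

Definition semilinear : Prop :=
  [/\ (forall x y, add x y = add y x),
      (forall x y z, add x (add y z) = add (add x y) z),
      (forall x, add x theta = x) &
      (forall x, smul 1 x = x)] /\
  [/\
      (forall (a : R) x y, smul a (add x y) = add (smul a x) (smul a y)),
      (forall (a b : R) x, smul a (smul b x) = smul (a * b) x) &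
      (forall x, smul 0 x = theta)].

Definition convex_elt (x : X) : Prop :=
  forall a b : R, 0 <= a -> 0 <= b -> smul (a + b) x = add (smul a x) (smul b x).

Definition is_metric (Y : Type) (m : Y -> Y -> R) : Prop :=
  [/\ (forall x y, 0 <= m x y),
      (forall x y, m x y = 0 <-> x = y),
      (forall x y, m x y = m y x) &
      (forall x y z, m x z <= m x y + m y z)].

Definition cauchy_seq (Y : Type) (m : Y -> Y -> R) (u : nat -> Y) : Prop :=
  forall e : R, 0 < e -> exists N, forall p q, (N <= p)%N -> (N <= q)%N -> m (u p) (u q) < e.

Definition converges_to (Y : Type) (m : Y -> Y -> R) (u : nat -> Y) (l : Y) : Prop :=
  (fun n => m (u n) l) @ \oo --> (0 : R).

Definition complete_metric (Y : Type) (m : Y -> Y -> R) : Prop :=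
  forall u : nat -> Y, cauchy_seq m u -> exists l, converges_to m u l.

Definition separable_metric (Y : Type) (m : Y -> Y -> R) : Prop :=
  exists dseq : nat -> Y, forall y (e : R), 0 < e -> exists n, m (dseq n) y < e.

Variable h : X -> X -> R.

Definition L_space : Prop :=
  [/\ semilinear, is_metric h, complete_metric h & separable_metric h] /\
  ((forall (a : R) x y, h (smul a x) (smul a y) = `|a| * h x y) /\
      (forall x y z, h (add x z) (add y z) <= h x y)).

Definition isotropic : Prop := forall x y z, h (add x z) (add y z) = h x y.

Definition convexifying (P : X -> X) : Prop :=
  [/\ (forall x, convex_elt (P x)),
      (forall y, convex_elt y -> exists x, P x = y),
      (forall x y, h (P x) (P y) <= h x y),
      (forall x, P (P x) = P x) &
      (forall (a b : R) x y, P (add (smul a x) (smul b y)) = add (smul a (P x)) (smul b (P y)))].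

Variable P : X -> X.
Context (d : measure_display) (T : measurableType d).
Variable mu : {measure set T -> \bar R}.

Definition simple_rep (g : T -> X) (s : seq (X * set T)) : Prop :=
  [/\ (forall p, List.In p s -> measurable p.2),
      (forall i j, (i < size s)%N -> (j < size s)%N -> i <> j ->
          (nth (theta, set0) s i).2 `&` (nth (theta, set0) s j).2 = set0),
      (forall t, exists2 p, List.In p s & p.2 t) &
      (forall t p, List.In p s -> p.2 t -> g t = p.1)].

Definition simple_integral (s : seq (X * set T)) : X :=
  foldr add theta [seq smul (fine (mu p.2)) (P p.1) | p <- s].

Definition Xbounded_fun (f : T -> X) : Prop :=
  exists M : R, forall t, h (f t) theta <= M.

Definition h_measurable (f : T -> X) : Prop :=
  forall x, measurable_fun setT (fun t => h (f t) x).

Definition is_integral_T (f : T -> X) (I : X) : Prop :=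
  forall (g : nat -> T -> X) (s : nat -> seq (X * set T)),
    (forall n, simple_rep (g n) (s n)) ->
    (exists M : R, forall n t, h (g n t) theta <= M) ->
    {ae mu, forall t, converges_to h (fun n => g n t) (f t)} ->
    converges_to h (fun n => simple_integral (s n)) I.

Definition integral_T (f : T -> X) : X :=
  match pselect (exists I, is_integral_T f I) with
  | left e => projT1 (cid e)
  | right _ => theta
  end.

Definition Xintegral (Q : set T) (f : T -> X) : X :=
  integral_T (fun t => smul (\1_Q t) (f t)).

End Semilinear.

Section MetricT.
Variables (T : Type) (r : T -> T -> R).

Definition open_r (A : set T) : Prop :=
  forall t, A t -> exists2 e : R, 0 < e & (forall s, r t s < e -> A s).

Definition compact_r (Q : set T) : Prop :=
  forall (I : Type) (U : I -> set T), (forall i, open_r (U i)) ->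
    Q `<=` \bigcup_i U i -> exists2 F : set I, finite_set F & Q `<=` \bigcup_(i in F) U i.
End MetricT.

Definition modulus_of_continuity (omega : R -> R) : Prop :=
  [/\ (forall a b, 0 <= a -> a <= b -> omega a <= omega b),
      (forall a (e : R), 0 <= a -> 0 < e -> exists2 del : R, 0 < del &
           forall b, 0 <= b -> `|b - a| < del -> `|omega b - omega a| < e),
      (forall a, 0 <= a -> 0 <= omega a),
      omega 0 = 0 &
      (forall a b, 0 <= a -> 0 <= b -> omega (a + b) <= omega a + omega b)].

Definition H_omega (T X : Type) (r : T -> T -> R) (h : X -> X -> R) (omega : R -> R)
    (f : T -> X) : Prop :=
  forall s t, h (f s) (f t) <= omega (r s t).

End Defs.

(* On Q, a Hoelder function f is approximated by step functions which, on each cell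
   of a finite partition of Q of mesh 1/(n+1), take the value of f at a centre of
   the cell, and vanish off Q.  They converge uniformly, so by completeness their
   simple integrals converge to the integral of f.  For step functions the integral
   is a finite sum, and splitting both sums over the common refinement gives
   h(int g, int g') <= int h(g, g'), because h is contracted by translations and P is
   1-Lipschitz with convex values.  Comparing with the step function equal to f(t)
   on Q bounds h(mu(Q) P(f t), int_Q f) by int_Q omega(r(t,s)) + omega(1/(n+1)) mu(Q).
   For sharpness, normalize a nonzero convex element to u with P u = u and
   h(u, theta) = 1, and take f(s) = omega(r(t,s)) u: its step approximations take
   values on the ray {a u | a >= 0}, on which h(a u, theta) = a, so h(theta, int_Q f)
   is at least int_Q omega(r(t,s)) as well. *)

From HB Require Import structures.
From mathcomp Require Import all_boot all_order all_algebra.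
From mathcomp Require Import all_classical all_reals all_analysis.
From mathcomp Require Import ring lra measurable_realfun.
Import Order.TTheory GRing.Theory Num.Theory.
Local Open Scope classical_set_scope.
Local Open Scope ring_scope.
Set Implicit Arguments. Unset Strict Implicit. Unset Printing Implicit Defensive.

Lemma List_In_nth (A : Type) (x0 : A) (s : seq A) p :
  List.In p s -> exists2 i, (i < size s)%N & nth x0 s i = p.
Proof.
elim: s => [//|a s IH] /= [->|/IH [i si <-]]; first by exists 0%N.
by exists i.+1.
Qed.

Lemma nth_List_In (A : Type) (x0 : A) (s : seq A) i :
  (i < size s)%N -> List.In (nth x0 s i) s.
Proof.
elim: s i => [//|a s IH] [|i] //=; first by left.
by move=> si; right; apply: IH.
Qed.

Lemma ler_cvg0_addr (R : realType) (a b : R) (v : nat -> R) :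
  v @ \oo --> 0 -> (forall n, a <= b + v n) -> a <= b.
Proof.
move=> v0 abv; apply/ler_addgt0Pr => e e0.
have [N _ vN] := cvgr0_norm_lt _ v0 _ e0.
apply: le_trans (abv N) _; rewrite lerD2l.
exact: le_trans (ler_norm _) (ltW (vN N (leqnn N))).
Qed.

Lemma cvg_nat_cst0 (R : realType) : (fun _ : nat => 0 : R) @ \oo --> 0.
Proof. by apply/cvgrPdist_lt => e e0; apply: nearW => n; rewrite subrr normr0. Qed.

Section Modulus.
Variables (R : realType) (omega : R -> R).
Hypothesis omega_mod : modulus_of_continuity omega.

Lemma omega_ge0 a : 0 <= a -> 0 <= omega a.
Proof. by case: omega_mod => _ _ + _ _; apply. Qed.

Lemma omega_le_add a b c : 0 <= a -> 0 <= b -> 0 <= c -> a <= b + c ->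
  omega a <= omega b + omega c.
Proof.
have [om_mono _ _ _ om_sub] := omega_mod => a0 b0 c0 abc.
exact: le_trans (om_mono _ _ a0 abc) (om_sub _ _ b0 c0).
Qed.

Lemma omega_inv_cvg0 : (fun n : nat => omega n.+1%:R^-1) @ \oo --> 0.
Proof.
have [_ om_cont _ om0 _] := omega_mod.
apply/cvgrPdist_lt => e e0; have [del del0 omdel] := om_cont 0 e (lexx 0) e0.
apply: filterS (near_infty_natSinv_lt (PosNum del0)) => n /= ndel.
have n0 : 0 <= n.+1%:R^-1 :> R by rewrite invr_ge0.
have := omdel _ n0; rewrite subr0 ger0_norm // om0 subr0 sub0r normrN.
exact.
Qed.

End Modulus.

Section MetricSpace.
Variables (R : realType) (T : pointedType) (r : T -> T -> R).
Hypothesis r_metric : is_metric r.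

Let r_ge0 x y : 0 <= r x y. Proof. by case: r_metric. Qed.
Let r_eq0 x y : r x y = 0 <-> x = y. Proof. by case: r_metric. Qed.
Let rC x y : r x y = r y x. Proof. by case: r_metric. Qed.
Let r_tri x y z : r x z <= r x y + r y z. Proof. by case: r_metric. Qed.

Lemma open_r_ball c del : open_r r [set t | r c t < del].
Proof.
move=> t /= ct; exists (del - r c t); first by rewrite subr_gt0.
by move=> s ts /=; have := r_tri c t s; lra.
Qed.

Lemma compact_r_closed Q : compact_r r Q -> open_r r (~` Q).
Proof.
move=> Q_compact t nQt; pose U (n : nat) := [set u | n.+1%:R^-1 < r u t].
have U_open n : open_r r (U n).
  move=> u; rewrite /U /= => Uu; exists (r u t - n.+1%:R^-1); first by rewrite subr_gt0.
  move=> v uv; rewrite /U /=; have := r_tri u v t.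
  by set k := n.+1%:R^-1 in Uu uv *; lra.
have [F F_fin QF] : exists2 F : set nat, finite_set F & Q `<=` \bigcup_(n in F) U n.
  apply: (Q_compact _ U U_open) => q Qq.
  have qt : 0 < r q t.
    by rewrite lt_neqAle r_ge0 andbT; apply/eqP => /esym/r_eq0 qt; rewrite -qt in nQt.
  by have [k] := ltr_add_invr qt; rewrite add0r => ?; exists k.
have [sF sFE] := (finite_seqP F).1 F_fin; pose N := (\max_(n <- sF) n)%N.
exists N.+1%:R^-1; first by rewrite invr_gt0.
move=> s ts Qs; have [n Fn Un] := QF s Qs.
have nN : (n <= N)%N by apply: leq_bigmax_seq => //; rewrite sFE in Fn.
have : N.+1%:R^-1 <= n.+1%:R^-1 :> R by rewrite lef_pV2 ?posrE // ler_nat.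
by move: Un ts; rewrite /U /= rC; set k := N.+1%:R^-1; set k' := n.+1%:R^-1; lra.
Qed.

Lemma compact_r_net : compact_r r setT ->
  forall del, 0 < del -> exists cs : seq T, forall t, has (fun c => r c t < del) cs.
Proof.
move=> T_compact del del0.
have [F F_fin TF] : exists2 F : set T,
    finite_set F & setT `<=` \bigcup_(c in F) [set t | r c t < del].
  apply: (T_compact _ _ (fun c => @open_r_ball c del)) => t _.
  by exists t => //=; rewrite (proj2 (r_eq0 t t)).
have [cs csE] := (finite_seqP F).1 F_fin; exists cs => t.
by have [c Fc ct] := TF t I; apply/hasP; exists c => //; rewrite csE in Fc.
Qed.

Lemma compact_r_bounded : compact_r r setT -> exists D, forall a b, r a b <= D.
Proof.
move=> T_compact; have [cs cs_net] := compact_r_net T_compact ltr01.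
pose D := \big[Num.max/0]_(c <- cs) \big[Num.max/0]_(c' <- cs) r c c'.
exists (D + 2) => a b.
have /hasP [ca ca_cs caa] := cs_net a; have /hasP [cb cb_cs cbb] := cs_net b.
have cD : r ca cb <= D.
  apply: le_trans (le_bigmax_seq 0 cb xpredT (r ca) cb_cs erefl) _.
  exact: le_bigmax_seq 0 ca xpredT (fun c => \big[Num.max/0]_(c' <- cs) r c c') ca_cs erefl.
have := r_tri a ca b; have := r_tri ca cb b; rewrite (rC a ca); lra.
Qed.

Definition r_continuous (phi : T -> R) := forall t e, 0 < e ->
  exists2 del, 0 < del & forall s, r t s < del -> `|phi s - phi t| < e.

Lemma r_continuous_omega omega t0 : modulus_of_continuity omega ->
  r_continuous (fun t => omega (r t0 t)).
Proof.
case=> _ om_cont _ _ _ t e e0; have [del del0 omdel] := om_cont _ _ (r_ge0 t0 t) e0.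
exists del => // s ts; apply: omdel => //; rewrite ltr_norml.
by have := r_tri t0 t s; have := r_tri t0 s t; rewrite (rC s t); lra.
Qed.

End MetricSpace.

Section BorelMetric.
Variables (R : realType) (d : measure_display) (T : measurableType d) (r : T -> T -> R).
Hypothesis r_metric : is_metric r.
Hypothesis r_borel : @measurable d T = <<s [set A | open_r r A] >>.

Lemma open_r_measurable A : open_r r A -> measurable A.
Proof. by rewrite r_borel; exact: sub_sigma_algebra. Qed.

Lemma measurable_r_ball c del : measurable [set t | r c t < del].
Proof. exact/open_r_measurable/(@open_r_ball _ _ _ r_metric c del). Qed.

Lemma compact_r_measurable Q : compact_r r Q -> measurable Q.
Proof.
move=> Q_compact; rewrite -(setCK Q); apply/measurableC/open_r_measurable.
exact: compact_r_closed.
Qed.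

Lemma measurable_r_continuous (phi : T -> R) : r_continuous r phi -> measurable_fun setT phi.
Proof.
move=> phi_cont; apply: (measurability _ (RGenOpens.measurableE R)).
move=> _ [_ [x [y ->]] <-]; rewrite setTI; apply: open_r_measurable => t /=.
rewrite in_itv /= => /andP [xt ty].
have e0 : 0 < Num.min (phi t - x) (y - phi t) by rewrite lt_min !subr_gt0 xt ty.
have [del del0 phidel] := phi_cont t _ e0; exists del => // s /phidel.
rewrite lt_min !ltr_norml in_itv /= => /andP [/andP [? ?] /andP [? ?]].
by apply/andP; split; lra.
Qed.

End BorelMetric.

Section Semilinear.
Variables (R : realType) (X : Type) (add : X -> X -> X) (smul : R -> X -> X).
Variables (theta : X) (h : X -> X -> R) (P : X -> X).
Hypothesis addC : forall x y, add x y = add y x.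
Hypothesis addA : forall x y z, add x (add y z) = add (add x y) z.
Hypothesis add0 : forall x, add x theta = x.
Hypothesis smul1 : forall x, smul 1 x = x.
Hypothesis smulM : forall (a b : R) x, smul a (smul b x) = smul (a * b) x.
Hypothesis smul0 : forall x, smul 0 x = theta.
Hypothesis h_ge0 : forall x y, 0 <= h x y.
Hypothesis h_eq0 : forall x y, h x y = 0 <-> x = y.
Hypothesis hC : forall x y, h x y = h y x.
Hypothesis h_tri : forall x y z, h x z <= h x y + h y z.
Hypothesis h_scale : forall (a : R) x y, h (smul a x) (smul a y) = `|a| * h x y.
Hypothesis h_translate : forall x y z, h (add x z) (add y z) <= h x y.
Hypothesis h_complete : complete_metric h.
Hypothesis P_convex : forall x, convex_elt add smul (P x).
Hypothesis P_onto : forall y, convex_elt add smul y -> exists x, P x = y.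
Hypothesis P_lipschitz : forall x y, h (P x) (P y) <= h x y.
Hypothesis P_idem : forall x, P (P x) = P x.
Hypothesis P_linear : forall (a b : R) x y,
  P (add (smul a x) (smul b y)) = add (smul a (P x)) (smul b (P y)).

Lemma add0x x : add theta x = x. Proof. by rewrite addC add0. Qed.

HB.instance Definition _ := Monoid.isComLaw.Build X theta add addA addC add0x.

Lemma smulx0 a : smul a theta = theta.
Proof. by rewrite -(smul0 theta) smulM mulr0. Qed.

Lemma hxx x : h x x = 0. Proof. exact/h_eq0. Qed.

Lemma h_scale_ge0 (a : R) x y : 0 <= a -> h (smul a x) (smul a y) = a * h x y.
Proof. by move=> a0; rewrite h_scale ger0_norm. Qed.

Lemma P_scale a x : P (smul a x) = smul a (P x).
Proof. by have := P_linear a 0 x x; rewrite !smul0 !add0. Qed.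

Lemma P_theta : P theta = theta.
Proof. by rewrite -(smul0 theta) P_scale smul0. Qed.

Lemma h_add_le x1 x2 y1 y2 : h (add x1 x2) (add y1 y2) <= h x1 y1 + h x2 y2.
Proof.
apply: le_trans (h_tri _ (add y1 x2) _) _; apply: lerD; first exact: h_translate.
by rewrite ![add y1 _]addC; exact: h_translate.
Qed.

Lemma h_big_le (I : Type) (s : seq I) (F G : I -> X) :
  h (\big[add/theta]_(i <- s) F i) (\big[add/theta]_(i <- s) G i)
    <= \sum_(i <- s) h (F i) (G i).
Proof.
elim: s => [|i s IH]; first by rewrite !big_nil hxx.
by rewrite !big_cons; apply: le_trans (h_add_le _ _ _ _) _; exact: lerD.
Qed.

Lemma convex_smul_sum (x : X) (I : Type) (s : seq I) (b : I -> R) :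
  convex_elt add smul x -> (forall i, 0 <= b i) ->
  smul (\sum_(i <- s) b i) x = \big[add/theta]_(i <- s) smul (b i) x.
Proof.
move=> cx b0; elim: s => [|i s IH]; first by rewrite !big_nil smul0.
by rewrite !big_cons cx ?IH //; exact: sumr_ge0.
Qed.

Section Ray.
Variable u : X.
Hypotheses (u_convex : convex_elt add smul u) (hu : h u theta = 1).

Lemma h_ray_theta a : 0 <= a -> h (smul a u) theta = a.
Proof. by move=> a0; rewrite -(smulx0 a) h_scale_ge0 // hu mulr1. Qed.

Lemma h_ray_le a b : 0 <= b -> b <= a -> h (smul a u) (smul b u) <= a - b.
Proof.
move=> b0 ba; rewrite -{1}(subrK b a) u_convex ?subr_ge0 //.
rewrite -{2}[smul b u]add0x; apply: le_trans (h_translate _ _ _) _.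
by rewrite h_ray_theta ?subr_ge0.
Qed.

End Ray.

Lemma exists_unit_fixed_convex : (exists x, convex_elt add smul x /\ x <> theta) ->
  exists u, [/\ convex_elt add smul u, P u = u & h u theta = 1].
Proof.
move=> [x [x_convex x_neq]]; have hx : 0 < h x theta.
  by rewrite lt_neqAle h_ge0 andbT; apply/eqP => /esym/h_eq0.
have hx_inv : 0 <= (h x theta)^-1 by rewrite invr_ge0 ltW.
have u_convex : convex_elt add smul (smul (h x theta)^-1 x).
  by move=> a b a0 b0; rewrite !smulM mulrDl x_convex ?mulr_ge0.
exists (smul (h x theta)^-1 x); split => //.
- by have [y <-] := P_onto u_convex; rewrite P_idem.
- by rewrite -[X in h _ X](smulx0 (h x theta)^-1) h_scale_ge0 // mulVf // lt0r_neq0.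
Qed.

Section StepFunctions.
Context (d : measure_display) (T : measurableType d).
Variable mu : {measure set T -> \bar R}.
Hypothesis mu_fin : (mu setT < +oo)%E.

Lemma measure_fineK A : measurable A -> mu A = (fine (mu A))%:E.
Proof.
move=> mA; rewrite fineK // ge0_fin_numE //.
by apply: le_lt_trans mu_fin; apply: le_measure; rewrite ?inE.
Qed.

Definition measurable_partition (I : finType) (E : I -> set T) : Prop :=
  [/\ forall i, measurable (E i),
      forall i j, i != j -> E i `&` E j = set0 &
      forall t, exists i, E i t].

Lemma measurable_partitionX (I J : finType) (E : I -> set T) (F : J -> set T) :
  measurable_partition E -> measurable_partition F ->
  measurable_partition (fun p : I * J => E p.1 `&` F p.2).
Proof.
move=> [mE dE cE] [mF dF cF]; split.
- by move=> p; exact: measurableI.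
- move=> [i j] [i' j'] /= ij; apply/seteqP; split => [t [[Ei Fj] [Ei' Fj']]|//].
  have [ii'|ii'] := eqVneq i i'; last by rewrite -(dE _ _ ii').
  subst i'; have jj' : j != j' by apply: contraNneq ij => ->.
  by rewrite -(dF _ _ jj').
- by move=> t; have [i Ei] := cE t; have [j Fj] := cF t; exists (i, j).
Qed.

Section StepFunction.
Variables (I : finType) (E : I -> set T) (c : I -> R) (phi : T -> R).
Hypotheses (E_partition : measurable_partition E) (phiE : forall i t, E i t -> phi t = c i).

Lemma step_fun_sum : phi = (fun t => \sum_i c i * \1_(E i) t).
Proof.
have [_ dE cE] := E_partition; apply/funext => t; have [i Eit] := cE t.
rewrite (bigD1 i) //= big1 ?addr0; first by rewrite indicE mem_set // mulr1 (phiE Eit).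
move=> j ji; rewrite indicE memNset ?mulr0 // => Ejt.
by have : (E j `&` E i) t by []; rewrite dE.
Qed.

Lemma measurable_step_fun : measurable_fun setT phi.
Proof.
have [mE _ _] := E_partition; rewrite step_fun_sum.
apply: measurable_sum => i; apply: measurable_funM.
  exact: measurable_cst.
exact: measurable_indic.
Qed.

Lemma integral_step_fun : (forall i, 0 <= c i) ->
  (\int[mu]_t (phi t)%:E = \sum_i (c i)%:E * mu (E i))%E.
Proof.
move=> c0; have [mE _ _] := E_partition; rewrite step_fun_sum.
have mcE i : measurable_fun setT (fun t => c i * \1_(E i) t).
  apply: measurable_funM; first exact: measurable_cst.
  exact: measurable_indic.
under eq_integral do rewrite -sumEFin.
rewrite ge0_integral_sum //; first last.
- by move=> i t _; rewrite lee_fin mulr_ge0 // indicE; case: (_ \in _).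
- by move=> i; exact/measurable_EFinP.
apply: eq_bigr => i _; under eq_integral do rewrite EFinM.
rewrite ge0_integralZl_EFin //; first by rewrite integral_indic // setIT.
by apply/measurable_EFinP; exact: measurable_indic.
Qed.

End StepFunction.

Lemma measure_partition_sum (I : finType) (E : I -> set T) A :
  measurable_partition E -> measurable A -> (mu A = \sum_i mu (A `&` E i))%E.
Proof.
(* Integrate the indicator of A as a step function on the refinement of E by A, ~` A. *)
move=> E_partition mA; pose B (b : bool) := if b then A else ~` A.
have B_partition : measurable_partition B.
  split; first by case=> //; exact: measurableC.
    by case=> -[] //= _; rewrite ?setICr ?setICl.
  by move=> t; case: (pselect (A t)) => At; [exists true|exists false].
have := @integral_step_fun _ _ (fun p : I * bool => (p.2 : nat)%:R) \1_A
  (measurable_partitionX E_partition B_partition).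
rewrite integral_indic // setIT => ->; first last.
- by move=> -[i []].
- move=> [i []] t [_ /= Bt]; rewrite indicE; first by rewrite mem_set.
  by rewrite memNset.
rewrite -(pair_big xpredT xpredT (fun i (b : bool) => (b%:R)%:E * mu (E i `&` B b))%E) /=.
apply: eq_bigr => i _.
by rewrite big_bool /= mul1e mul0e adde0 setIC.
Qed.

Lemma fine_measure_partition_sum (I : finType) (E : I -> set T) A :
  measurable_partition E -> measurable A ->
  fine (mu A) = \sum_i fine (mu (A `&` E i)).
Proof.
move=> E_partition mA; have [mE _ _] := E_partition.
apply: EFin_inj; rewrite -sumEFin -measure_fineK // (measure_partition_sum E_partition mA).
by apply: eq_bigr => i _; rewrite -measure_fineK //; exact: measurableI.
Qed.

Local Notation cell s i := (nth (theta, set0) s i).2.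
Local Notation value s i := (nth (theta, set0) s i).1.
Local Notation sint := (simple_integral add smul theta P mu).

Lemma simple_rep_partition (g : T -> X) s : simple_rep theta g s ->
  measurable_partition (fun i : 'I_(size s) => cell s i).
Proof.
move=> [mS dS cS _]; split.
- by move=> i; apply: mS; exact: nth_List_In.
- by move=> i j ij; apply: dS => // /val_inj ij'; rewrite ij' eqxx in ij.
- move=> t; have [p ps pt] := cS t; have [i si ip] := List_In_nth (theta, set0) ps.
  by exists (Ordinal si); rewrite /= ip.
Qed.

Lemma simple_rep_value (g : T -> X) s : simple_rep theta g s ->
  forall (i : 'I_(size s)) t, cell s i t -> g t = value s i.
Proof. by move=> [_ _ _ vS] i t; apply: vS; exact: nth_List_In. Qed.

Lemma simple_integral_big (s : seq (X * set T)) :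
  sint s = \big[add/theta]_(p <- s) smul (fine (mu p.2)) (P p.1).
Proof. by rewrite /simple_integral foldrE big_map. Qed.

Lemma simple_integral_cells (s : seq (X * set T)) :
  sint s = \big[add/theta]_(i < size s) smul (fine (mu (cell s i))) (P (value s i)).
Proof. by rewrite simple_integral_big (big_nth (theta, set0)) big_mkord. Qed.

Section TwoSimpleFunctions.
Variables (g g' : T -> X) (s s' : seq (X * set T)).
Hypotheses (rs : simple_rep theta g s) (rs' : simple_rep theta g' s').

Let refinement (p : 'I_(size s) * 'I_(size s')) := cell s p.1 `&` cell s' p.2.

Let refinement_partition : measurable_partition refinement.
Proof. exact: measurable_partitionX (simple_rep_partition rs) (simple_rep_partition rs'). Qed.

Let h_refinement p t : refinement p t -> h (g t) (g' t) = h (value s p.1) (value s' p.2).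
Proof. by move=> [Et E't]; rewrite (simple_rep_value rs Et) (simple_rep_value rs' E't). Qed.

Lemma measurable_h_simple : measurable_fun setT (fun t => h (g t) (g' t)).
Proof. exact: measurable_step_fun refinement_partition h_refinement. Qed.

Lemma h_simple_integral_le :
  ((h (sint s) (sint s'))%:E <= \int[mu]_t (h (g t) (g' t))%:E)%E.
Proof.
have [mE _ _] := simple_rep_partition rs; have [mE' _ _] := simple_rep_partition rs'.
pose beta i j := fine (mu (cell s i `&` cell s' j)).
have beta_ge0 i j : 0 <= beta i j by apply/fine_ge0/measure_ge0.
have -> : sint s = \big[add/theta]_(i < size s) \big[add/theta]_(j < size s')
    smul (beta i j) (P (value s i)).
  rewrite simple_integral_cells; apply: eq_bigr => i _.
  rewrite (fine_measure_partition_sum (simple_rep_partition rs') (mE i)).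
  exact: convex_smul_sum.
have -> : sint s' = \big[add/theta]_(i < size s) \big[add/theta]_(j < size s')
    smul (beta i j) (P (value s' j)).
  rewrite exchange_big simple_integral_cells; apply: eq_bigr => j _.
  rewrite (fine_measure_partition_sum (simple_rep_partition rs) (mE' j)).
  by rewrite convex_smul_sum //; apply: eq_bigr => i _; rewrite /beta setIC.
apply: (@le_trans _ _
  (\sum_(i < size s) \sum_(j < size s') beta i j * h (value s i) (value s' j))%:E).
  rewrite lee_fin; apply: le_trans (h_big_le _ _ _) _; apply: ler_sum => i _.
  apply: le_trans (h_big_le _ _ _) _; apply: ler_sum => j _.
  by rewrite h_scale_ge0 //; exact: ler_wpM2l (P_lipschitz _ _).
rewrite (integral_step_fun refinement_partition h_refinement) //.
rewrite pair_bigA -sumEFin; apply: lee_sum => -[i j] _ /=.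
rewrite measure_fineK; last exact: measurableI.
by rewrite -EFinM mulrC.
Qed.

End TwoSimpleFunctions.

Section BoundedIntegral.
Variables (phi : T -> R) (k : R).
Hypotheses (phi_meas : measurable_fun setT phi) (phi_bound : forall t, 0 <= phi t <= k).

Lemma bounded_integral_le : (\int[mu]_t (phi t)%:E <= (k * fine (mu setT))%:E)%E.
Proof.
rewrite EFinM -measure_fineK // -integral_cst //.
apply: ge0_le_integral => //.
- by move=> t _; rewrite lee_fin; case/andP: (phi_bound t).
- exact/measurable_EFinP.
- by move=> t _; rewrite lee_fin; case/andP: (phi_bound t).
Qed.

Lemma bounded_integral_fineK :
  (\int[mu]_t (phi t)%:E = (fine (\int[mu]_t (phi t)%:E))%:E)%E.
Proof.
rewrite fineK // ge0_fin_numE; first exact: le_lt_trans bounded_integral_le (ltry _).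
by apply: integral_ge0 => t _; rewrite lee_fin; case/andP: (phi_bound t).
Qed.

End BoundedIntegral.

Section UniformApproximation.
Variables (F : T -> X) (g : nat -> T -> X) (s : nat -> seq (X * set T)) (e : nat -> R).
Hypotheses (rs : forall n, simple_rep theta (g n) (s n)) (e_cvg0 : e @ \oo --> 0).
Hypothesis gF : forall n t, h (g n t) (F t) <= e n.

Let e_ge0 n : 0 <= e n. Proof. exact: le_trans (h_ge0 _ _) (gF n point). Qed.

Lemma h_simple_integral_uniform p q :
  h (sint (s p)) (sint (s q)) <= (e p + e q) * fine (mu setT).
Proof.
have gpq t : 0 <= h (g p t) (g q t) <= e p + e q.
  rewrite h_ge0 /=; apply: le_trans (h_tri _ (F t) _) _.
  by apply: lerD => //; rewrite hC.
rewrite -lee_fin; apply: le_trans (h_simple_integral_le (rs p) (rs q)) _.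
exact: bounded_integral_le (measurable_h_simple (rs p) (rs q)) gpq.
Qed.

Lemma simple_integral_cauchy : cauchy_seq h (fun n => sint (s n)).
Proof.
move=> eps eps0; have [K [K0 muK]] : exists K, 0 < K /\ fine (mu setT) <= K.
  by exists (fine (mu setT) + 1); rewrite lerDl ltr_pwDr // fine_ge0 // measure_ge0.
have [N _ eN] := cvgr0_norm_lt _ e_cvg0 _ (divr_gt0 eps0 (addr_gt0 K0 K0)).
exists N => p q Np Nq; apply: le_lt_trans (h_simple_integral_uniform p q) _.
have ep : e p < eps / (K + K) by rewrite -[e p]ger0_norm //; exact: eN.
have eq : e q < eps / (K + K) by rewrite -[e q]ger0_norm //; exact: eN.
apply: le_lt_trans (_ : _ <= (e p + e q) * K) _.
  by rewrite ler_wpM2l ?addr_ge0.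
have -> : eps = (eps / (K + K) + eps / (K + K)) * K.
  by field; rewrite lt0r_neq0 ?addr_gt0.
by rewrite ltr_pM2r //; exact: ltrD.
Qed.

Lemma is_integral_T_uniform M I : (forall n t, h (g n t) theta <= M) ->
  converges_to h (fun n => sint (s n)) I -> is_integral_T add smul theta h P mu F I.
Proof.
move=> gM sI g' s' rs' [M' g'M] g'F.
pose phi n t := h (g' n t) (g n t).
have phi_meas n : measurable_fun setT (fun t => (phi n t)%:E).
  exact/measurable_EFinP/(measurable_h_simple (rs' n) (rs n)).
have phi_bound n t : 0 <= phi n t <= M' + M.
  by rewrite h_ge0 /=; apply: le_trans (h_tri _ theta _) _; rewrite lerD // hC.
have phi_cvg0 : \forall t \ae mu, setT t -> (phi n t)%:E @[n --> \oo] --> 0%E.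
  apply: filterS g'F => t g'Ft _; apply/fine_cvgP; split; first exact: nearW.
  apply: (squeeze_cvgr (f := cst 0) (h := fun n => h (g' n t) (F t) + e n)).
  - apply: nearW => n; rewrite h_ge0 /=; apply: le_trans (h_tri _ (F t) _) _.
    by rewrite lerD // hC.
  - exact: cvg_nat_cst0.
  - by rewrite -[0](addr0 0); exact: cvgD.
have cst_integrable : mu.-integrable setT (fun=> (M' + M)%:E).
  apply/integrableP; split; first exact: measurable_cst.
  by rewrite integral_cst // measure_fineK // -EFinM ltry.
have phi_dom : \forall t \ae mu, forall n, setT t -> (`|(phi n t)%:E| <= (M' + M)%:E)%E.
  by apply: aeW => t n _; rewrite lee_fin ger0_norm; case/andP: (phi_bound n t).
have [_ _ int_phi_cvg0] := dominated_convergence measurableT phi_meas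
  (measurable_cst 0%E) phi_cvg0 cst_integrable phi_dom.
rewrite integral0 in int_phi_cvg0.
apply: (squeeze_cvgr (f := cst 0)
  (h := fun n => fine (\int[mu]_t (phi n t)%:E) + h (sint (s n)) I)).
- apply: nearW => n; rewrite h_ge0 /=; apply: le_trans (h_tri _ (sint (s n)) _) _.
  rewrite lerD // -lee_fin.
  rewrite -(bounded_integral_fineK (measurable_h_simple (rs' n) (rs n)) (phi_bound n)).
  exact: h_simple_integral_le.
- exact: cvg_nat_cst0.
- by rewrite -[0](addr0 0); apply: cvgD => //; exact: fine_cvg int_phi_cvg0.
Qed.

Lemma integral_T_uniform M : (forall n t, h (g n t) theta <= M) ->
  converges_to h (fun n => sint (s n)) (integral_T add smul theta h P mu F).
Proof.
move=> gM; have [I sI] := h_complete simple_integral_cauchy.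
rewrite /integral_T; case: pselect => [FI|[]]; last first.
  by exists I; exact: is_integral_T_uniform gM sI.
apply: (projT2 (cid FI)) => //; first by exists M.
apply: aeW => t; apply: (squeeze_cvgr (f := cst 0) (h := e)) => //.
- by apply: nearW => n; rewrite h_ge0 gF.
- exact: cvg_nat_cst0.
Qed.

End UniformApproximation.

Section HolderApproximation.
Variables (r : T -> T -> R) (omega : R -> R) (Q : set T).
Hypotheses (r_metric : is_metric r) (T_compact : compact_r r setT).
Hypothesis r_borel : @measurable d T = <<s [set A | open_r r A] >>.
Hypotheses (omega_mod : modulus_of_continuity omega) (Q_compact : compact_r r Q).

Let r_ge0 x y : 0 <= r x y. Proof. by case: r_metric. Qed.
Let rC x y : r x y = r y x. Proof. by case: r_metric. Qed.
Let r_tri x y z : r x z <= r x y + r y z. Proof. by case: r_metric. Qed.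
Let mQ : measurable Q. Proof. exact: (compact_r_measurable r_metric r_borel Q_compact). Qed.

Definition net_index (cs : seq T) (del : R) (t : T) := find (fun c => r c t < del) cs.

Definition net_center (cs : seq T) (del : R) (t : T) := nth point cs (net_index cs del t).

Definition step_approx (cs : seq T) (del : R) (f : T -> X) (t : T) :=
  smul (\1_Q t) (f (net_center cs del t)).

Definition step_approx_rep (cs : seq T) (del : R) (f : T -> X) : seq (X * set T) :=
  (theta, ~` Q) :: mkseq (fun i => (f (nth point cs i), Q `&` [set t | net_index cs del t = i]))
                         (size cs).

Lemma measurable_net_index cs del i : measurable [set t | net_index cs del t = i].
Proof.
have ball_meas c : measurable [set t | r c t < del].
  exact: (measurable_r_ball r_metric r_borel).
elim: cs i => [|c cs IH] i.
  case: i => [|i].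
  - by rewrite (_ : [set t | _] = setT) //; apply/seteqP; split.
  - by rewrite (_ : [set t | _] = set0) //; apply/seteqP; split.
have -> : [set t | net_index (c :: cs) del t = i] = if i is j.+1
    then ~` [set t | r c t < del] `&` [set t | net_index cs del t = j]
    else [set t | r c t < del].
  rewrite /net_index /=; case: i => [|j]; apply/seteqP; split => t /=; case: ifP => //.
  - by move=> _ [->].
  - by move=> _ [cdel]; exfalso; exact: cdel.
  - by move=> _ [_ ->].
by case: i => [|j]; [|apply: measurableI; [apply: measurableC|]].
Qed.

Lemma simple_rep_step_approx cs del f : (forall t, has (fun c => r c t < del) cs) ->
  simple_rep theta (step_approx cs del f) (step_approx_rep cs del f).
Proof.
move=> cs_net; split.
- move=> p /= [<-|]; first exact/measurableC.
  move=> /(List_In_nth (theta, set0)) [i]; rewrite size_mkseq => ilt.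
  by rewrite nth_mkseq // => <- /=; exact/measurableI/measurable_net_index.
- move=> [|i] [|j] /=; rewrite size_mkseq => ilt jlt ij //.
  + by rewrite nth_mkseq //; apply/seteqP; split => t // [? []].
  + by rewrite nth_mkseq //; apply/seteqP; split => t // [[]].
  + rewrite !nth_mkseq //; apply/seteqP; split => t // [[_ /= ti] [_ /= tj]].
    by apply: ij; rewrite -ti -tj.
- move=> t; case: (pselect (Q t)) => Qt; last by exists (theta, ~` Q); [left|].
  have kt : (net_index cs del t < size cs)%N by rewrite /net_index -has_find.
  exists (f (net_center cs del t), Q `&` [set t' | net_index cs del t' = net_index cs del t]) => //.
  right; rewrite -(nth_mkseq (theta, set0)
    (fun i => (f (nth point cs i), Q `&` [set t | net_index cs del t = i])) kt).
  by apply: nth_List_In; rewrite size_mkseq.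
- move=> t p /= [<- /= nQt|]; first by rewrite /step_approx indicE memNset // smul0.
  move=> /(List_In_nth (theta, set0)) [i]; rewrite size_mkseq => ilt.
  rewrite nth_mkseq // => <- /= [Qt kt].
  by rewrite /step_approx /net_center indicE mem_set // smul1 kt.
Qed.

Definition mesh (n : nat) : R := n.+1%:R^-1.

Lemma mesh_gt0 n : 0 < mesh n. Proof. by rewrite invr_gt0. Qed.

Definition net (n : nat) : seq T :=
  projT1 (cid (compact_r_net r_metric T_compact (mesh_gt0 n))).

Lemma netP n t : has (fun c => r c t < mesh n) (net n).
Proof. exact: (projT2 (cid (compact_r_net r_metric T_compact (mesh_gt0 n)))). Qed.

Definition approx f n := step_approx (net n) (mesh n) f.
Definition approx_rep f n := step_approx_rep (net n) (mesh n) f.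

Lemma simple_rep_approx f n : simple_rep theta (approx f n) (approx_rep f n).
Proof. exact/simple_rep_step_approx/netP. Qed.

Lemma approx_in f n t : Q t -> approx f n t = f (net_center (net n) (mesh n) t).
Proof. by move=> Qt; rewrite /approx /step_approx indicE mem_set // smul1. Qed.

Lemma approx_out f n t : ~ Q t -> approx f n t = theta.
Proof. by move=> Qt; rewrite /approx /step_approx indicE memNset // smul0. Qed.

Lemma r_net_center_lt n t : r (net_center (net n) (mesh n) t) t < mesh n.
Proof. exact: (nth_find point (netP n t)). Qed.

Lemma h_approx_le f n t : H_omega r h omega f ->
  h (approx f n t) (smul (\1_Q t) (f t)) <= omega (mesh n).
Proof.
move=> f_holder; have [om_mono _ _ _ _] := omega_mod.
case: (pselect (Q t)) => Qt.
- rewrite approx_in // indicE mem_set // smul1; apply: le_trans (f_holder _ _) _.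
  exact/om_mono/ltW/r_net_center_lt.
- rewrite approx_out // indicE memNset // smul0 hxx.
  exact/omega_ge0/ltW/mesh_gt0.
Qed.

Lemma Xintegral_approx_cvg f : H_omega r h omega f ->
  converges_to h (fun n => sint (approx_rep f n)) (Xintegral add smul theta h P mu Q f).
Proof.
move=> f_holder; have [D rD] := compact_r_bounded r_metric T_compact.
have [om_mono _ _ _ _] := omega_mod.
have approx_bounded n t : h (approx f n t) theta <= omega D + h (f point) theta.
  case: (pselect (Q t)) => Qt.
  - rewrite approx_in //; apply: le_trans (h_tri _ (f point) _) _; rewrite lerD //.
    exact: le_trans (f_holder _ _) (om_mono _ _ (r_ge0 _ _) (rD _ _)).
  - rewrite approx_out // hxx addr_ge0 //.
    exact: (omega_ge0 omega_mod (le_trans (r_ge0 point point) (rD point point))).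
exact: (integral_T_uniform (simple_rep_approx f) (omega_inv_cvg0 omega_mod)
  (fun n t => h_approx_le n t f_holder) approx_bounded).
Qed.

Section AtPoint.
Variable t0 : T.
Hypothesis muQ_gt0 : (0 < mu Q)%E.

Local Notation muQ := (fine (mu Q)).
Local Notation XQ := (Xintegral add smul theta h P mu Q).

Let fine_muQ_gt0 : 0 < muQ.
Proof. by have := muQ_gt0; rewrite (measure_fineK mQ) lte_fin. Qed.

Definition omega_on_Q t := \1_Q t * omega (r t0 t).

Lemma measurable_omega_on_Q : measurable_fun setT omega_on_Q.
Proof.
apply: measurable_funM; first exact: measurable_indic.
exact/(measurable_r_continuous r_borel)/(r_continuous_omega r_metric).
Qed.

Lemma omega_on_Q_bounded : exists K, forall t, 0 <= omega_on_Q t <= K.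
Proof.
have [D rD] := compact_r_bounded r_metric T_compact; have [om_mono _ _ _ _] := omega_mod.
exists (omega D) => t; rewrite /omega_on_Q indicE; case: (t \in Q).
- by rewrite mul1r omega_ge0 //= om_mono.
- by rewrite mul0r lexx omega_ge0 // (le_trans (r_ge0 t t)).
Qed.

Definition omega_mass := fine (\int[mu]_t (omega_on_Q t)%:E).

Lemma integral_omega_on_Q : (\int[mu]_t (omega_on_Q t)%:E = omega_mass%:E)%E.
Proof.
have [K wK] := omega_on_Q_bounded.
exact: bounded_integral_fineK measurable_omega_on_Q wK.
Qed.

Lemma integral_omega_Q : (\int[mu]_(s in Q) (omega (r t0 s))%:E = omega_mass%:E)%E.
Proof.
rewrite -integral_omega_on_Q integral_mkcond; apply: eq_integral => t _.
by rewrite patchE /omega_on_Q indicE; case: (t \in Q); rewrite ?mul1r ?mul0r.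
Qed.

Lemma integral_indicQ k : 0 <= k -> (\int[mu]_t (k * \1_Q t)%:E = (k * muQ)%:E)%E.
Proof.
move=> k0; under eq_integral do rewrite EFinM.
rewrite ge0_integralZl_EFin //; last exact/measurable_EFinP/measurable_indic.
by rewrite integral_indic // setIT (measure_fineK mQ) -EFinM.
Qed.

Lemma integral_add_indicQ (k K : R) (phi : T -> R) : 0 <= k -> measurable_fun setT phi ->
  (forall t, 0 <= phi t <= K) ->
  (\int[mu]_t (phi t + k * \1_Q t)%:E = (fine (\int[mu]_t (phi t)%:E) + k * muQ)%:E)%E.
Proof.
move=> k0 phi_meas phi_bound; have kQ_meas : measurable_fun setT (fun t => k * \1_Q t).
  exact/measurable_funM/measurable_indic.
under eq_integral do rewrite EFinD.
rewrite ge0_integralD //.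
  by rewrite integral_indicQ // EFinD -(bounded_integral_fineK phi_meas phi_bound).
- by move=> t _; rewrite lee_fin; case/andP: (phi_bound t).
- exact/measurable_EFinP.
- by move=> t _; rewrite lee_fin mulr_ge0 // indicE; case: (_ \in _).
- exact/measurable_EFinP.
Qed.

Lemma simple_rep_constQ x :
  simple_rep theta (fun t => smul (\1_Q t) x) [:: (theta, ~` Q); (x, Q)].
Proof.
split.
- by move=> p /= [<-|[<-|[]]] //; exact: measurableC.
- move=> [|[|i]] [|[|j]] //= _ _ ij; try by exfalso; apply: ij.
  + by apply/seteqP; split => t // [].
  + by apply/seteqP; split => t // [].
- move=> t; case: (pselect (Q t)) => Qt; first by exists (x, Q); [right; left|].
  by exists (theta, ~` Q); [left|].
- move=> t p /= [<- /= nQt|[<- /= Qt|[]]]; rewrite indicE.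
  + by rewrite memNset // smul0.
  + by rewrite mem_set // smul1.
Qed.

Lemma simple_integral_constQ x : sint [:: (theta, ~` Q); (x, Q)] = smul muQ (P x).
Proof. by rewrite /simple_integral /= P_theta smulx0 add0x add0. Qed.

Lemma approx_error_cvg0 f : H_omega r h omega f ->
  (fun n => muQ^-1 * (omega (mesh n) * muQ + h (sint (approx_rep f n)) (XQ f))) @ \oo --> 0.
Proof.
move=> f_holder; rewrite (_ : 0 = muQ^-1 * (0 * muQ + 0)); last by rewrite mul0r add0r mulr0.
apply: cvgMl_tmp; apply: cvgD; last exact: Xintegral_approx_cvg.
by apply: cvgMr_tmp; exact: omega_inv_cvg0.
Qed.

Lemma h_const_approx_le f n t : H_omega r h omega f ->
  h (smul (\1_Q t) (f t0)) (approx f n t) <= omega_on_Q t + omega (mesh n) * \1_Q t.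
Proof.
move=> f_holder; have [om_mono _ _ _ _] := omega_mod.
rewrite /omega_on_Q; case: (pselect (Q t)) => Qt.
- rewrite approx_in // indicE mem_set // smul1 mul1r mulr1.
  apply: le_trans (f_holder _ _) _; set c := net_center _ _ t.
  apply: le_trans (omega_le_add omega_mod (r_ge0 _ _) (r_ge0 t0 t) (r_ge0 t c) (r_tri t0 t c)) _.
  by rewrite lerD2l om_mono // rC ltW // r_net_center_lt.
- by rewrite approx_out // indicE memNset // smul0 mul0r mulr0 addr0 hxx.
Qed.

Lemma h_const_approx_integral_le f n : H_omega r h omega f ->
  h (smul muQ (P (f t0))) (sint (approx_rep f n)) <= omega_mass + omega (mesh n) * muQ.
Proof.
move=> f_holder; have [K wK] := omega_on_Q_bounded.
have om_n : 0 <= omega (mesh n) by exact/(omega_ge0 omega_mod)/ltW/mesh_gt0.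
rewrite -simple_integral_constQ -lee_fin.
apply: le_trans (h_simple_integral_le (simple_rep_constQ _) (simple_rep_approx f n)) _.
rewrite /omega_mass -(integral_add_indicQ om_n measurable_omega_on_Q wK).
apply: ge0_le_integral => //.
- by move=> t _; rewrite lee_fin.
- exact/measurable_EFinP/(measurable_h_simple (simple_rep_constQ _) (simple_rep_approx f n)).
- apply/measurable_EFinP/measurable_funD; first exact: measurable_omega_on_Q.
  exact/measurable_funM/measurable_indic.
- by move=> t _; rewrite lee_fin h_const_approx_le.
Qed.

Lemma h_P_Xintegral_le f : H_omega r h omega f ->
  h (P (f t0)) (smul muQ^-1 (XQ f)) <= muQ^-1 * omega_mass.
Proof.
move=> f_holder; have c0 : 0 <= muQ^-1 by rewrite invr_ge0 ltW.
have -> : P (f t0) = smul muQ^-1 (smul muQ (P (f t0))).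
  by rewrite smulM mulVf ?smul1 // lt0r_neq0.
apply: (ler_cvg0_addr (approx_error_cvg0 f_holder)) => n.
apply: le_trans (h_tri _ (smul muQ^-1 (sint (approx_rep f n))) _) _.
rewrite !h_scale_ge0 // -!mulrDr addrA ler_wpM2l // lerD2r.
exact: h_const_approx_integral_le.
Qed.

Section Extremal.
Variable u : X.
Hypotheses (u_convex : convex_elt add smul u) (Pu : P u = u) (hu : h u theta = 1).

Definition ray_fun t := smul (omega (r t0 t)) u.

Lemma ray_fun_holder : H_omega r h omega ray_fun.
Proof.
move=> s t; rewrite /ray_fun; have om_ge0 a : 0 <= omega (r t0 a).
  exact: (omega_ge0 omega_mod (r_ge0 _ _)).
have [ts|st] := leP (omega (r t0 t)) (omega (r t0 s)).
- apply: le_trans (h_ray_le u_convex hu (om_ge0 t) ts) _.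
  have := omega_le_add omega_mod (r_ge0 t0 s) (r_ge0 t0 t) (r_ge0 t s) (r_tri t0 t s).
  by rewrite (rC t s); lra.
- rewrite hC; apply: le_trans (h_ray_le u_convex hu (om_ge0 s) (ltW st)) _.
  have := omega_le_add omega_mod (r_ge0 t0 t) (r_ge0 t0 s) (r_ge0 s t) (r_tri t0 s t).
  lra.
Qed.

Lemma simple_integral_ray (s : seq (X * set T)) :
  (forall p, List.In p s -> exists2 w, 0 <= w & p.1 = smul w u) ->
  sint s = smul (\sum_(p <- s) fine (mu p.2) * h p.1 theta) u.
Proof.
have mu_ge0 (A : set T) : 0 <= fine (mu A) by apply/fine_ge0/measure_ge0.
elim: s => [|p s IH] s_ray; first by rewrite simple_integral_big !big_nil smul0.
rewrite simple_integral_big !big_cons -simple_integral_big IH; last first.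
  by move=> q qs; apply: s_ray; right.
have [w w0 ->] := s_ray p (or_introl erefl).
rewrite P_scale Pu smulM h_ray_theta // u_convex ?mulr_ge0 //.
by apply: sumr_ge0 => q _; rewrite mulr_ge0.
Qed.

Lemma approx_rep_ray n p :
  List.In p (approx_rep ray_fun n) -> exists2 w, 0 <= w & p.1 = smul w u.
Proof.
move=> /= [<-|]; first by exists 0; rewrite ?smul0.
move=> /(List_In_nth (theta, set0)) [i]; rewrite size_mkseq => ilt.
rewrite nth_mkseq // => <- /=; exists (omega (r t0 (nth point (net n) i))) => //.
exact: (omega_ge0 omega_mod (r_ge0 _ _)).
Qed.

Lemma integral_h_approx_ray n : (\int[mu]_t (h (approx ray_fun n t) theta)%:E =
  (\sum_(p <- approx_rep ray_fun n) fine (mu p.2) * h p.1 theta)%:E)%E.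
Proof.
have rs := simple_rep_approx ray_fun n; have [mE _ _] := simple_rep_partition rs.
rewrite (integral_step_fun (simple_rep_partition rs)
  (c := fun i : 'I_(size (approx_rep ray_fun n)) =>
     h (nth (theta, set0) (approx_rep ray_fun n) i).1 theta)) //.
- rewrite (big_nth (theta, set0)) big_mkord -sumEFin; apply: eq_bigr => i _.
  by rewrite (measure_fineK (mE i)) -EFinM mulrC.
- by move=> i t /(simple_rep_value rs) ->.
Qed.

Lemma omega_mass_le_approx_ray n : omega_mass <=
  \sum_(p <- approx_rep ray_fun n) fine (mu p.2) * h p.1 theta + omega (mesh n) * muQ.
Proof.
have [D rD] := compact_r_bounded r_metric T_compact; have [om_mono _ _ _ _] := omega_mod.
have om_n : 0 <= omega (mesh n) by exact/(omega_ge0 omega_mod)/ltW/mesh_gt0.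
have rs := simple_rep_approx ray_fun n.
have approx_bound t : 0 <= h (approx ray_fun n t) theta <= omega D.
  rewrite h_ge0 /=; case: (pselect (Q t)) => Qt; last first.
    by rewrite approx_out // hxx (omega_ge0 omega_mod (le_trans (r_ge0 t t) (rD t t))).
  by rewrite approx_in // /ray_fun h_ray_theta ?om_mono ?(omega_ge0 omega_mod).
have approx_meas : measurable_fun setT (fun t => h (approx ray_fun n t) theta).
  rewrite (_ : (fun t => _) = fun t => h (approx ray_fun n t) (smul (\1_Q t) theta)).
    exact: measurable_h_simple rs (simple_rep_constQ theta).
  by apply/funext => t; rewrite smulx0.
rewrite (_ : \sum_(p <- _) _ = fine (\int[mu]_t (h (approx ray_fun n t) theta)%:E)%E); last first.
  by rewrite integral_h_approx_ray.
rewrite -lee_fin -integral_omega_on_Q -(integral_add_indicQ om_n approx_meas approx_bound).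
apply: ge0_le_integral => //.
- by move=> t _; have [K wK] := omega_on_Q_bounded; rewrite lee_fin; case/andP: (wK t).
- exact/measurable_EFinP/measurable_omega_on_Q.
- apply/measurable_EFinP/measurable_funD => //.
  exact/measurable_funM/measurable_indic.
- move=> t _; rewrite lee_fin /omega_on_Q; case: (pselect (Q t)) => Qt; last first.
    by rewrite indicE memNset // mul0r mulr0 addr0 h_ge0.
  rewrite indicE mem_set // mul1r mulr1 approx_in // /ray_fun h_ray_theta //; last first.
    exact: (omega_ge0 omega_mod (r_ge0 _ _)).
  set c := net_center _ _ t.
  apply: le_trans (omega_le_add omega_mod (r_ge0 _ _) (r_ge0 t0 c) (r_ge0 c t) (r_tri t0 c t)) _.
  by rewrite lerD2l om_mono // ltW // r_net_center_lt.
Qed.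

Lemma h_P_Xintegral_ray : h (P (ray_fun t0)) (smul muQ^-1 (XQ ray_fun)) = muQ^-1 * omega_mass.
Proof.
have c0 : 0 <= muQ^-1 by rewrite invr_ge0 ltW.
apply/eqP; rewrite eq_le (h_P_Xintegral_le ray_fun_holder) /=.
have -> : P (ray_fun t0) = theta.
  have [_ _ _ om0 _] := omega_mod; have [_ r_eq0 _ _] := r_metric.
  by rewrite /ray_fun (_ : r t0 t0 = 0) ?om0 ?smul0 ?P_theta //; exact/r_eq0.
apply: (ler_cvg0_addr (approx_error_cvg0 ray_fun_holder)) => n.
have := simple_integral_ray (@approx_rep_ray n).
set S := sint _; set sigma := \sum_(p <- _) _ => S_ray.
have sigma_ge0 : 0 <= sigma.
  by apply: sumr_ge0 => p _; rewrite mulr_ge0 //; apply/fine_ge0/measure_ge0.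
have hS : h theta (smul muQ^-1 S) = muQ^-1 * sigma.
  by rewrite S_ray smulM hC h_ray_theta // mulr_ge0.
have := h_tri theta (smul muQ^-1 (XQ ray_fun)) (smul muQ^-1 S).
rewrite hS (hC (smul _ (XQ _))) h_scale_ge0 //.
have := ler_wpM2l c0 (omega_mass_le_approx_ray n); rewrite -/sigma !mulrDr.
set a := h theta _; set b := h S _; lra.
Qed.

End Extremal.

Lemma h_P_Xintegral_le_integral f : H_omega r h omega f ->
  ((h (P (f t0)) (smul muQ^-1 (XQ f)))%:E
    <= (muQ^-1)%:E * \int[mu]_(s in Q) (omega (r t0 s))%:E)%E.
Proof. by move=> f_holder; rewrite integral_omega_Q -EFinM lee_fin h_P_Xintegral_le. Qed.

Lemma ereal_sup_h_P_Xintegral : (exists x, convex_elt add smul x /\ x <> theta) ->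
  ereal_sup [set (h (P (f t0)) (smul muQ^-1 (XQ f)))%:E | f in H_omega r h omega]
    = ((muQ^-1)%:E * \int[mu]_(s in Q) (omega (r t0 s))%:E)%E.
Proof.
move=> /exists_unit_fixed_convex [u [u_convex Pu hu]].
apply/eqP; rewrite eq_le; apply/andP; split.
- by apply: ge_ereal_sup => _ [f f_holder <-]; exact: h_P_Xintegral_le_integral.
- apply: ereal_sup_ubound; exists (ray_fun u) => /=; first exact: ray_fun_holder.
  by rewrite integral_omega_Q -EFinM h_P_Xintegral_ray.
Qed.

End AtPoint.

End HolderApproximation.

End StepFunctions.
End Semilinear.

Theorem corollary1 (R : realType) (X : Type) (add : X -> X -> X)
    (smul : R -> X -> X) (theta : X) (h : X -> X -> R) (P : X -> X)
    (d : measure_display) (T : measurableType d) (r : T -> T -> R)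
    (mu : {measure set T -> \bar R}) (omega : R -> R) (Q : set T) :
  L_space add smul theta h ->
  convexifying add smul h P ->
  is_metric r ->
  compact_r r setT ->
  (@measurable d T = <<s [set A | open_r r A] >>) ->
  (mu setT < +oo)%E ->
  modulus_of_continuity omega ->
  compact_r r Q ->
  (0 < mu Q)%E ->
  (forall (t : T) (f : T -> X), H_omega r h omega f ->
     ((h (P (f t)) (smul (fine (mu Q))^-1 (Xintegral add smul theta h P mu Q f)))%:E
      <= ((fine (mu Q))^-1)%:E * \int[mu]_(s in Q) (omega (r t s))%:E)%E)
  /\
  (isotropic add h -> (exists x, convex_elt add smul x /\ x <> theta) ->
   forall t : T,
     ereal_sup [set (h (P (f t)) (smul (fine (mu Q))^-1
                      (Xintegral add smul theta h P mu Q f)))%:E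
               | f in H_omega r h omega]
     = (((fine (mu Q))^-1)%:E * \int[mu]_(s in Q) (omega (r t s))%:E)%E).
Proof.
move=> [[[[addC addA add0 smul1] [_ smulM smul0]] h_metric h_complete _] [h_scale h_translate]].
move=> [P_convex P_onto P_lipschitz P_idem P_linear] r_metric T_compact r_borel mu_fin.
move=> omega_mod Q_compact muQ_gt0; have [h_ge0 h_eq0 hC h_tri] := h_metric.
split=> [t f f_holder|_ X_nontrivial t].
- by eapply h_P_Xintegral_le_integral; eassumption.
- by eapply ereal_sup_h_P_Xintegral; eassumption.
Qed.
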